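(* Let $G$ be a compact group, $\mathcal{X},\mathcal{Y}$ finite-dimensional real normed vector spaces, $\rho_1:G\to\mathrm{GL}(\mathcal{X})$, $\rho_2:G\to\mathrm{GL}(\mathcal{Y})$ continuous representations, and $p_\omega(\cdot\mid\mathbf{x})$ a fixed $G$ equivariant conditional distribution on $G$. Let $\{f_\theta\}_\theta$ be a family of continuous functions $\mathcal{X}\to\mathcal{Y}$ that is a universal approximator, i.e. for every continuous $\psi:\mathcal{X}\to\mathcal{Y}$, every compact $\mathcal{K}\subseteq\mathcal{X}$ and every $\epsilon>0$ there is $\theta$ with $\sup_{\mathbf{x}\in\mathcal{K}}\|\psi(\mathbf{x})-f_\theta(\mathbf{x})\|\le\epsilon$. Define $\phi_{\theta,\omega}(\mathbf{x})=\mathbb{E}_{g\sim p_\omega(\cdot\mid\mathbf{x})}[\rho_2(g)f_\theta(\rho_1(g)^{-1}\mathbf{x})]$. Then $\{\phi_{\theta,\omega}\}_\theta$ is a universal approximator of $G$ equivariant functions: for every continuous $G$ equivariant $\psi:\mathcal{X}\to\mathcal{Y}$ (i.e. $\psi(\rho_1(g)\mathbf{x})=\rho_2(g)\psi(\mathbf{x})$ for all $g,\mathbf{x}$), every compact $\mathcal{K}\subseteq\mathcal{X}$ and every $\epsilon>0$, there exists $\theta$ with $\sup_{\mathbf{x}\in\mathcal{K}}\|\psi(\mathbf{x})-\phi_{\theta,\omega}(\mathbf{x})\|\le\epsilon$.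
   Context: A conditional distribution on $G$ is a family $\{p_\omega(\cdot\mid\mathbf{x})\}_{\mathbf{x}\in\mathcal{X}}$ of Borel probability measures on $G$. It is called $G$ equivariant if for all $\mathbf{x}\in\mathcal{X}$ and $g'\in G$, the pushforward of $p_\omega(\cdot\mid\mathbf{x})$ under left multiplication $g\mapsto g'g$ equals $p_\omega(\cdot\mid\rho_1(g')\mathbf{x})$ (for densities: $p_\omega(g\mid\mathbf{x})=p_\omega(g'g\mid\rho_1(g')\mathbf{x})$ for all $\mathbf{x},g,g'$). *)

From HB Require Import structures.
From mathcomp Require Import all_boot all_order all_algebra.
From mathcomp Require Import all_classical all_reals all_analysis.
Set Implicit Arguments. Unset Strict Implicit. Unset Printing Implicit Defensive.
Import Order.TTheory GRing.Theory Num.Theory.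
Import numFieldNormedType.Exports.
Local Open Scope classical_set_scope.
Local Open Scope ring_scope.

Definition is_compact_group (G : ptopologicalType)
    (mul : G -> G -> G) (inv : G -> G) (e : G) : Prop :=
  [/\ (forall a b c, mul a (mul b c) = mul (mul a b) c),
      (forall a, mul e a = a /\ mul a e = a),
      (forall a, mul (inv a) a = e /\ mul a (inv a) = e),
      continuous (fun ab : G * G => mul ab.1 ab.2) &
      continuous inv /\ compact [set: G] /\ hausdorff_space G].

Definition borel_of (G : ptopologicalType) := g_sigma_algebraType (@open G).

Definition is_cont_rep (R : realType) (G : ptopologicalType)
    (mul : G -> G -> G) (n : nat) (rho : G -> 'M[R]_n) : Prop :=
  [/\ (forall g, rho g \in unitmx),
      (forall g h, rho (mul g h) = rho g *m rho h) &
      continuous rho].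

Definition is_norm (R : realType) (V : lmodType R) (N : V -> R) : Prop :=
  [/\ (forall v, N v = 0 -> v = 0),
      (forall (a : R) v, N (a *: v) = `|a| * N v) &
      (forall u v, N (u + v) <= N u + N v)].

(* G-equivariance of a conditional distribution x |-> p(.|x) on G:
   the pushforward of p(.|x) under g |-> g' g is p(.|rho1(g') x). *)
Definition equivariant_cond_distr (R : realType) (G : ptopologicalType)
    (mul : G -> G -> G) (n : nat) (rho1 : G -> 'M[R]_n)
    (p : 'cV[R]_n -> probability (borel_of G) R) : Prop :=
  forall (x : 'cV[R]_n) (g' : G) (A : set (borel_of G)), measurable A ->
    p x ((fun g : borel_of G => (mul g' g : borel_of G)) @^-1` A)
    = p (rho1 g' *m x) A.

Definition equivariant_fun (R : realType) (G : Type) (n m : nat)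
    (rho1 : G -> 'M[R]_n) (rho2 : G -> 'M[R]_m) (psi : 'cV[R]_n -> 'cV[R]_m) :=
  forall g x, psi (rho1 g *m x) = rho2 g *m psi x.

Definition expectation_vec (R : realType) d (T : measurableType d) (m : nat)
    (P : probability T R) (F : T -> 'cV[R]_m) : 'cV[R]_m :=
  \col_i (Rintegral P setT (fun t => F t i ord0)).

Definition symmetrized (R : realType) (G : ptopologicalType) (n m : nat)
    (rho1 : G -> 'M[R]_n) (rho2 : G -> 'M[R]_m)
    (p : 'cV[R]_n -> probability (borel_of G) R)
    (f : 'cV[R]_n -> 'cV[R]_m) (x : 'cV[R]_n) : 'cV[R]_m :=
  expectation_vec (p x)
    (fun g : borel_of G => rho2 g *m f (invmx (rho1 g) *m x)).

From HB Require Import structures.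
From mathcomp Require Import all_boot all_order all_algebra.
From mathcomp Require Import all_classical all_reals all_analysis.
From mathcomp Require Import ring lra.
Set Implicit Arguments.
Unset Strict Implicit.
Unset Printing Implicit Defensive.
Import Order.TTheory GRing.Theory Num.Theory.
Import numFieldNormedType.Exports.
Local Open Scope classical_set_scope.
Local Open Scope ring_scope.

(* Fix x in K and write y_g = rho1(g)^-1 x.  Equivariance of psi gives
     psi x - rho2(g) f(y_g) = rho2(g) (psi y_g - f y_g),
   so every value of the integrand defining phi(x) = E_g[rho2(g) f(y_g)] lies
   within |rho2(g)| |psi y_g - f y_g| (times a dimension factor) of psi x, and
   hence so does its expectation, whatever the distribution of g.  All y_g lie
   in the compact saturation {rho1(g) z | g in G, z in K}, and rho2 is bounded
   on the compact group G; so approximating psi by f on that compact set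
   approximates psi by phi on K.

   We work with the entrywise sup norm on matrices throughout and relate it to
   the given norm on the output space by the equivalence of norms on R^m. *)

Section MatrixAnalysis.
Variable R : realType.

Lemma continuous_mx (T : topologicalType) a b (F : T -> 'M[R]_(a, b)) :
  (forall i j, continuous (fun t => F t i j)) -> continuous F.
Proof.
move=> cF t; apply/cvg_mx_entourageP => A entA.
suff : \forall s \near t, forall i j, (F t i j, F s i j) \in A by [].
apply: (@filter_forall _ _ (fun i s => forall j, (F t i j, F s i j) \in A)
  (nbhs t)) => i.
apply: (@filter_forall _ _ (fun j s => (F t i j, F s i j) \in A) (nbhs t)) => j.
have /cvg_entourageP/(_ A entA) := cF i j t.
by move=> Aj; near=> s; rewrite inE; near: s.
Unshelve. all: by end_near. Qed.

Lemma continuous_mx_entry (T : topologicalType) a b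
    (F : T -> 'M[R]_(a, b)) i j :
  continuous F -> continuous (fun t => F t i j).
Proof.
by move=> cF t; exact: continuous_comp (cF t) (@coord_continuous _ _ _ i j _).
Qed.

Lemma continuous_mulmx (T : topologicalType) a b c
    (F : T -> 'M[R]_(a, b)) (H : T -> 'M[R]_(b, c)) :
  continuous F -> continuous H -> continuous (fun t => F t *m H t).
Proof.
move=> cF cH; apply: continuous_mx => i j.
under eq_fun do rewrite mxE.
apply: continuous_big => [|k _ t]; first exact: add_continuous.
by apply: continuousM; exact: continuous_mx_entry.
Qed.

Lemma mx_entry_le_norm a b (M : 'M[R]_(a, b)) i j : `|M i j| <= `|M|.
Proof. by rewrite [leRHS]mx_normrE (bigD1 (i, j)) //= le_max lexx. Qed.

Lemma mx_norm_le a b (M : 'M[R]_(a, b)) (c : R) :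
  0 <= c -> (forall i j, `|M i j| <= c) -> `|M| <= c.
Proof.
move=> c0 Mc; rewrite [leLHS]mx_normrE.
by elim/big_ind: _ => // x y hx hy; rewrite ge_max hx hy.
Qed.

Lemma mx_norm_mulmx a b c (A : 'M[R]_(a, b)) (B : 'M[R]_(b, c)) :
  `|A *m B| <= `|A| * `|B| *+ b.
Proof.
apply: mx_norm_le => [|i j]; first by rewrite mulrn_wge0 ?mulr_ge0.
rewrite mxE; apply: le_trans (ler_norm_sum _ _ _) _.
have -> : `|A| * `|B| *+ b = \sum_(k < b) `|A| * `|B|.
  by rewrite sumr_const card_ord.
apply: ler_sum => k _; rewrite normrM.
by apply: ler_pM => //; exact: mx_entry_le_norm.
Qed.

Lemma norm_trmx a b (M : 'M[R]_(a, b)) : `|M^T| = `|M|.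
Proof.
apply/le_anti; apply/andP; split; apply: mx_norm_le => // i j.
  by rewrite mxE; exact: mx_entry_le_norm.
by have := @mx_entry_le_norm _ _ M^T j i; rewrite mxE.
Qed.

Lemma continuous_trmx a b : continuous (fun M : 'M[R]_(a, b) => M^T).
Proof.
apply: continuous_mx => i j; under eq_fun do rewrite mxE.
exact: coord_continuous.
Qed.

(* Heine-Borel for column vectors, transported from the library's version for
   row vectors along the transposition homeomorphism. *)
Lemma cV_bounded_closed_compact m (A : set 'cV[R]_m) :
  bounded_set A -> closed A -> compact A.
Proof.
move=> bA cA; pose Ar := [set v : 'rV[R]_m | A v^T].
have -> : A = (fun v : 'rV[R]_m => v^T) @` Ar.
  apply/seteqP; split => [w Aw|_ [v Av <-] //].
  by exists w^T; rewrite /Ar /= trmxK.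
apply: continuous_compact; first exact/continuous_subspaceT/continuous_trmx.
apply: bounded_closed_compact.
  case: bA => M [Mr AM]; exists M; split=> // N MN v Av.
  have : `|v^T| <= N := AM N MN _ Av.
  by rewrite norm_trmx.
by apply: (@preimage_closed _ _ (fun v : 'rV[R]_m => v^T)) => // v _;
  exact: continuous_trmx.
Qed.

Lemma lipschitz_continuous (V : normedModType R) (f : V -> R) (C : R) :
  0 <= C -> (forall u v, `|f u - f v| <= C * `|u - v|) -> continuous f.
Proof.
move=> C0 fC x; apply/cvgrPdist_lt => e e0.
have C1 : 0 < C + 1 by lra.
have d0 : 0 < e / (C + 1) by rewrite divr_gt0.
near=> y; apply: le_lt_trans (fC x y) _.
have : ball x (e / (C + 1)) y by near: y; exact: near_ball.
rewrite -(@ball_normE _ V) /ball_ /= => xy.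
have eC : e / (C + 1) * (C + 1) = e by rewrite divfK // gt_eqF.
have := normr_ge0 (x - y); nra.
Unshelve. all: by end_near. Qed.

End MatrixAnalysis.

Section NormsOnColumns.
Variables (R : realType) (m : nat) (N : 'cV[R]_m -> R).
Hypothesis normN : is_norm N.

Let N_eq0 v : N v = 0 -> v = 0. Proof. by case: normN => + _ _; apply. Qed.
Let NZ a v : N (a *: v) = `|a| * N v. Proof. by case: normN. Qed.
Let ND u v : N (u + v) <= N u + N v. Proof. by case: normN. Qed.

Lemma is_norm0 : N 0 = 0.
Proof. by rewrite -(scale0r (0 : 'cV[R]_m)) NZ normr0 mul0r. Qed.

Lemma is_normN v : N (- v) = N v.
Proof. by rewrite -scaleN1r NZ normrN normr1 mul1r. Qed.

Lemma is_norm_ge0 v : 0 <= N v.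
Proof. by have := ND v (- v); rewrite subrr is_norm0 is_normN; lra. Qed.

Lemma is_norm_sum (I : Type) (r : seq I) (P : pred I) (F : I -> 'cV[R]_m) :
  N (\sum_(i <- r | P i) F i) <= \sum_(i <- r | P i) N (F i).
Proof.
elim: r => [|i r IHr]; first by rewrite !big_nil is_norm0.
rewrite !big_cons; case: (P i) => //.
by apply: le_trans (ND _ _) _; rewrite lerD2l.
Qed.

(* N is dominated by the sup norm: expand along the standard basis. *)
Lemma is_norm_le_sup : exists2 C, 0 <= C & forall w, N w <= C * `|w|.
Proof.
exists (\sum_(i < m) N (delta_mx i ord0)).
  by apply: sumr_ge0 => i _; exact: is_norm_ge0.
move=> w; rewrite {1}(matrix_sum_delta w).
under eq_bigr do rewrite big_ord1.
apply: le_trans (is_norm_sum _ _ _) _.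
rewrite mulr_suml; apply: ler_sum => i _.
rewrite NZ mulrC ler_wpM2l ?is_norm_ge0 //; exact: mx_entry_le_norm.
Qed.

(* Hence N is Lipschitz for the sup norm, in particular continuous. *)
Lemma continuous_is_norm : continuous N.
Proof.
have [C C0 NC] := is_norm_le_sup.
apply: (lipschitz_continuous C0) => u v.
have h1 := ND v (u - v); have h2 := ND u (v - u).
rewrite addrC subrK in h1; rewrite addrC subrK -opprB is_normN in h2.
have := NC (u - v); rewrite ler_norml; lra.
Qed.

(* Conversely the sup norm is dominated by N: N attains a positive minimum on
   the (compact) unit sphere of the sup norm. *)
Lemma sup_le_is_norm : exists2 c, 0 < c & forall w, `|w| <= c * N w.
Proof.
pose S := [set w : 'cV[R]_m | `|w| = 1].
have normalize w : w != 0 -> S (`|w|^-1 *: w).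
  by move=> w0; rewrite /S /= normrZ normfV normr_id mulVf // normr_eq0.
have [[w0 Sw0]|S0] := pselect (S !=set0); last first.
  exists 1 => // w; rewrite mul1r.
  have [->|w0] := eqVneq w 0; first by rewrite normr0 is_norm_ge0.
  by exfalso; apply: S0; exists (`|w|^-1 *: w); exact: normalize.
have cS : compact S.
  apply: cV_bounded_closed_compact.
    by exists 1; split => // M M1 v Sv; rewrite /= Sv ltW.
  apply: (@preimage_closed _ _ (fun v : 'cV[R]_m => `|v|) [set 1]).
    by move=> v _; exact: norm_continuous.
  exact: closed_eq.
have [u Su Nmin] := compact_EVT_min (ex_intro _ w0 Sw0) cS
  (continuous_subspaceT continuous_is_norm).
have u1 : `|u| = 1 by move: Su; rewrite inE.
have Nu0 : 0 < N u.
  rewrite lt_def is_norm_ge0 andbT; apply: contra_eqN u1 => /eqP /N_eq0 ->.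
  by rewrite normr0 eq_sym oner_eq0.
exists (N u)^-1; first by rewrite invr_gt0.
move=> w; have [->|wn0] := eqVneq w 0; first by rewrite normr0 is_norm0 mulr0.
have wp : 0 < `|w| by rewrite normr_gt0.
have := Nmin _ (mem_set (normalize w wn0)); rewrite NZ normfV normr_id.
by rewrite ler_pdivlMl // => Nw; rewrite mulrC ler_pdivlMr.
Qed.

Lemma is_norm_equiv : exists2 k, 0 < k &
  forall w, N w <= k * `|w| /\ `|w| <= k * N w.
Proof.
have [C C0 NC] := is_norm_le_sup; have [c c0 cN] := sup_le_is_norm.
exists (Num.max C c) => [|w]; first by rewrite lt_max c0 orbT.
split; [apply: le_trans (NC w) _ | apply: le_trans (cN w) _];
  by rewrite ler_wpM2r ?is_norm_ge0 // le_max lexx ?orbT.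
Qed.

End NormsOnColumns.

Section Expectations.
Variable R : realType.

Lemma continuous_borel_measurable (G : ptopologicalType) (F : G -> R) :
  continuous F -> measurable_fun setT (F : borel_of G -> R).
Proof.
move=> cF.
apply: (measurability _ (measurable_realfun.RGenOpens.measurableE R)).
move=> _ [_ [a [b ->] <-]]; rewrite setTI.
by apply: sub_sigma_algebra; move/continuousP: cF; apply; exact: interval_open.
Qed.

Variables (d : measure_display) (T : measurableType d) (P : probability T R).

Let P_finite : (P setT < +oo)%E.
Proof. by rewrite probability_setT ltry. Qed.

Lemma bounded_integrable (F : T -> R) (M : R) :
  measurable_fun setT F -> (forall t, `|F t| <= M) ->
  P.-integrable setT (EFin \o F).
Proof.
move=> mF FM; apply: measurable_bounded_integrable => //.
exists M; split; first exact: num_real.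
by move=> M' MM' t _; exact: le_trans (FM t) (ltW MM').
Qed.

Lemma Rintegral_near (F : T -> R) (a r : R) :
  measurable_fun setT F -> (forall t, `|a - F t| <= r) ->
  `|a - Rintegral P setT F| <= r.
Proof.
move=> mF Fa.
have Fb t : `|F t| <= `|a| + r.
  have := ler_normD a (F t - a); rewrite addrC subrK distrC.
  by move: (Fa t); lra.
have iF := bounded_integrable mF Fb.
have icst (c : R) : P.-integrable setT (EFin \o cst c).
  by apply: (@bounded_integrable _ `|c|) => //; exact: measurable_cst.
have Pcst (c : R) : Rintegral P setT (cst c) = c.
  rewrite Rintegral_cst //.
  by move: (probability_setT P) => /= ->; rewrite mulr1.
have lo : a - r <= Rintegral P setT F.
  rewrite -(Pcst (a - r)); apply: le_Rintegral; [by []|exact: icst|exact: iF|].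
  by move=> t _ /=; move: (Fa t); rewrite ler_norml => /andP[]; lra.
have hi : Rintegral P setT F <= a + r.
  rewrite -(Pcst (a + r)); apply: le_Rintegral; [by []|exact: iF|exact: icst|].
  by move=> t _ /=; move: (Fa t); rewrite ler_norml => /andP[]; lra.
by rewrite ler_norml; apply/andP; split; lra.
Qed.

Lemma expectation_vec_near m (F : T -> 'cV[R]_m) (a : 'cV[R]_m) (r : R) :
  0 <= r -> (forall i, measurable_fun setT (fun t => F t i ord0)) ->
  (forall t, `|a - F t| <= r) -> `|a - expectation_vec P F| <= r.
Proof.
move=> r0 mF Fa; apply: mx_norm_le => // i j; rewrite (ord1 j) !mxE.
apply: Rintegral_near => // t.
have := @mx_entry_le_norm R _ _ (a - F t) i ord0; rewrite !mxE.
by move=> /le_trans; apply.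
Qed.

End Expectations.

Section Representations.
Variables (R : realType) (G : ptopologicalType).
Variables (mul : G -> G -> G) (inv : G -> G) (e : G).
Hypothesis groupG : is_compact_group mul inv e.
Variables (n : nat) (rho : G -> 'M[R]_n).
Hypothesis rep_rho : is_cont_rep mul rho.

Lemma rep_unit : rho e = 1%:M.
Proof.
case: groupG => _ unitG _ _ _; case: rep_rho => rho_unit rhoM _.
have idem : rho e *m rho e = rho e by rewrite -rhoM; case: (unitG e) => ->.
by rewrite -[LHS]mul1mx -(mulVmx (rho_unit e)) -mulmxA idem.
Qed.

Lemma rep_mulV g : rho g *m rho (inv g) = 1%:M.
Proof.
case: groupG => _ _ invG _ _; case: rep_rho => _ rhoM _.
by rewrite -rhoM; case: (invG g) => _ ->; exact: rep_unit.
Qed.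

Lemma rep_inv g : invmx (rho g) = rho (inv g).
Proof.
case: rep_rho => rho_unit _ _.
by rewrite -[LHS]mulmx1 -(rep_mulV g) mulmxA mulVmx // mul1mx.
Qed.

Lemma rep_bounded : exists2 B, 0 <= B & forall g, `|rho g| <= B.
Proof.
case: groupG => _ _ _ _ [_ [cG _]]; case: rep_rho => _ _ crho.
have /compact_bounded [M [Mr bM]] :=
  continuous_compact (continuous_subspaceT crho) cG.
exists (`|M| + 1) => [|g]; first by rewrite addr_ge0.
apply: (bM (`|M| + 1)); last by exists g.
by apply: le_lt_trans (real_ler_norm Mr) _; rewrite ltrDl.
Qed.

End Representations.

Lemma compact_saturation (R : realType) (G : topologicalType) n
    (rho : G -> 'M[R]_n) (K : set 'cV[R]_n) :
  compact [set: G] -> continuous rho -> compact K ->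
  compact [set rho gx.1 *m gx.2 | gx in [set: G] `*` K].
Proof.
move=> cG crho cK; apply: continuous_compact; last exact: compact_setX.
apply/continuous_subspaceT/continuous_mulmx => gx.
  by apply: (@continuous_comp _ _ _ fst rho); [exact: cvg_fst | exact: crho].
exact: cvg_snd.
Qed.

Section Symmetrization.
Variables (R : realType) (G : ptopologicalType).
Variables (mul : G -> G -> G) (inv : G -> G) (e : G).
Hypothesis groupG : is_compact_group mul inv e.
Variables (n m : nat) (rho1 : G -> 'M[R]_n) (rho2 : G -> 'M[R]_m).
Hypotheses (rep1 : is_cont_rep mul rho1) (rep2 : is_cont_rep mul rho2).
Variable p : 'cV[R]_n -> probability (borel_of G) R.
Variables (f psi : 'cV[R]_n -> 'cV[R]_m).
Hypotheses (cont_f : continuous f) (equiv_psi : equivariant_fun rho1 rho2 psi).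

Lemma symmetrized_integrand_measurable x i :
  measurable_fun setT
    (fun g : borel_of G => (rho2 g *m f (invmx (rho1 g) *m x)) i ord0).
Proof.
apply: continuous_borel_measurable.
under eq_fun do rewrite (rep_inv groupG rep1).
have [_ _ _ _ [cinv _]] := groupG.
have [_ _ crho1] := rep1; have [_ _ crho2] := rep2.
have cy : continuous (fun g => rho1 (inv g) *m x).
  apply: continuous_mulmx (@cst_continuous _ _ x) => g.
  exact: continuous_comp (cinv g) (crho1 _).
have cF : continuous (fun g => rho2 g *m f (rho1 (inv g) *m x)).
  apply: continuous_mulmx => [//|g].
  apply: (@continuous_comp _ _ _ (fun g => rho1 (inv g) *m x) f);
    last exact: cont_f.
  exact: cy.
exact: continuous_mx_entry cF.
Qed.

(* Equivariance of psi turns each integrand error into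
   rho2(g) (psi - f)(rho1(g)^-1 x). *)
Lemma symmetrized_error x (B delta : R) :
  0 <= B -> 0 <= delta -> (forall g, `|rho2 g| <= B) ->
  (forall g, `|psi (rho1 (inv g) *m x) - f (rho1 (inv g) *m x)| <= delta) ->
  `|psi x - symmetrized rho1 rho2 p f x| <= B * delta *+ m.
Proof.
move=> B0 delta0 rhoB close.
apply: expectation_vec_near => [|i|g]; first by rewrite mulrn_wge0 ?mulr_ge0.
  exact: symmetrized_integrand_measurable.
rewrite (rep_inv groupG rep1); set y := rho1 (inv g) *m x.
have -> : psi x = rho2 g *m psi y.
  by rewrite -equiv_psi /y mulmxA (rep_mulV groupG rep1) mul1mx.
rewrite -mulmxBr; apply: le_trans (mx_norm_mulmx (rho2 g) (psi y - f y)) _.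
rewrite lerMn2r; apply/orP; right.
by apply: ler_pM; [exact: normr_ge0 | exact: normr_ge0 | exact: rhoB |
  exact: close].
Qed.

End Symmetrization.

Theorem theorem2 (R : realType) (G : ptopologicalType)
    (mul : G -> G -> G) (inv : G -> G) (e : G)
    (n m : nat) (rho1 : G -> 'M[R]_n) (rho2 : G -> 'M[R]_m)
    (NY : 'cV[R]_m -> R)
    (p : 'cV[R]_n -> probability (borel_of G) R)
    (Theta : Type) (f : Theta -> 'cV[R]_n -> 'cV[R]_m) :
  is_compact_group mul inv e ->
  is_cont_rep mul rho1 -> is_cont_rep mul rho2 ->
  is_norm NY ->
  equivariant_cond_distr mul rho1 p ->
  (forall th, continuous (f th)) ->
  (forall psi : 'cV[R]_n -> 'cV[R]_m, continuous psi ->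
    forall K : set 'cV[R]_n, compact K ->
    forall eps : R, 0 < eps ->
    exists th, forall x, K x -> NY (psi x - f th x) <= eps) ->
  forall psi : 'cV[R]_n -> 'cV[R]_m, continuous psi ->
    equivariant_fun rho1 rho2 psi ->
  forall K : set 'cV[R]_n, compact K ->
  forall eps : R, 0 < eps ->
  exists th, forall x, K x ->
    NY (psi x - symmetrized rho1 rho2 p (f th) x) <= eps.
Proof.
move=> groupG rep1 rep2 normNY _ cont_f univ psi cont_psi equiv_psi K cK.
move=> eps eps0.
have [k k0 NYk] := is_norm_equiv normNY.
have [B B0 rhoB] := rep_bounded groupG rep2.
(* Approximate psi by f to precision delta on the compact saturation of K. *)
pose KG := [set rho1 gx.1 *m gx.2 | gx in [set: G] `*` K].
have cKG : compact KG.
  case: groupG rep1 => _ _ _ _ [_ [cG _]] [_ _ crho1].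
  exact: compact_saturation.
pose L := k * k * B *+ m.
have L0 : 0 <= L by rewrite mulrn_wge0 // !mulr_ge0 // ltW.
pose delta := eps / (L + 1).
have delta0 : 0 < delta by rewrite divr_gt0 // ltr_wpDl.
have [th close] := univ psi cont_psi KG cKG delta delta0.
exists th => x Kx.
have err : `|psi x - symmetrized rho1 rho2 p (f th) x|
    <= B * (k * delta) *+ m.
  apply: (symmetrized_error groupG rep1 rep2 p (cont_f th) equiv_psi) => //.
    by rewrite mulr_ge0 // ltW.
  move=> g.
  apply: le_trans (proj2 (NYk _)) _; rewrite ler_pM2l //.
  by apply: close; exists (inv g, x).
apply: le_trans (proj1 (NYk _)) _.
apply: le_trans (ler_wpM2l (ltW k0) err) _.
have -> : k * (B * (k * delta) *+ m) = L * delta.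
  by rewrite /L -!mulrnAl; ring.
have Ldelta : (L + 1) * delta = eps.
  by rewrite /delta mulrC divfK // gt_eqF // ltr_wpDl.
by rewrite -Ldelta ler_pM2r // lerDl.
Qed.
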